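(* Setting as in the context. (a) For $(\sigma,\tau)\in G$, one has $L(\sigma,\tau)=L$ if and only if $(\sigma,\tau)\in H$. (b) There exists a strict violation of $(M,N)$ if and only if there exists $(\sigma,\tau)\in G$ such that $L(\sigma,\tau)>L$ in the monomial order.
   Context: Let $K$ be a field and $\mathcal{Q}$ a bipartite quiver (every arrow goes from a source vertex to a sink vertex) with arrows $h_1,\dots,h_r$ and a nonnegative integer $m_\gamma$ attached to each vertex $\gamma$. For each $k$ let $X^{(k)}=[x^{(k)}_{ij}]$ be an $m_{{\rm t}(h_k)}\times m_{{\rm s}(h_k)}$ matrix of distinct independent variables (all variables distinct), in $K[X]$. For a sink $\alpha$, $A_\alpha$ is the horizontal concatenation $[X^{(r_1)}|\cdots|X^{(r_s)}]$ over the arrows $h_{r_1},\dots,h_{r_s}$ ($r_1<\dots<r_s$) with target $\alpha$; for a source $\beta$, $A_\beta$ is the vertical stacking of $X^{(r'_1)},\dots,X^{(r'_t)}$ over the arrows with source $\beta$ ($r'_1<\dots<r'_t$). Fix a lexicographic monomial order $>$ consistent with every $A_\gamma$ (in each $A_\gamma$ the variables strictly decrease from left to right along rows and from top to bottom along columns). Fix an arrow from a source $\gamma_2$ to a sink $\gamma_1$, let $A=A_{\gamma_1}$, $B=A_{\gamma_2}$, let $u,v$ be positive integers, let $M$ be a $u\times u$ minor of $A$ and $N$ a $v\times v$ minor of $B$. Let $L=\mathrm{lcm}(\mathrm{LM}(M),\mathrm{LM}(N))=x_{p_1}x_{p_2}\cdots x_{p_l}$ where $x_{p_1}>x_{p_2}>\dots>x_{p_l}$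 and $p_i=(\alpha_i,\beta_i,r_i)$ means $x_{p_i}=x^{(r_i)}_{\alpha_i\beta_i}$. Let $S_M=\{i: x_{p_i}\mid \mathrm{LM}(M)\}$ and $S_N=\{i: x_{p_i}\mid\mathrm{LM}(N)\}$. Let $\mathrm{Sym}(S_M)$ (resp. $\mathrm{Sym}(S_N)$) be the group of permutations of $\{1,\dots,l\}$ fixing every index outside $S_M$ (resp. $S_N$), and $G=\mathrm{Sym}(S_M)\times\mathrm{Sym}(S_N)$. For $(\sigma,\tau)\in G$ define the monomial $L(\sigma,\tau)=\prod_{i=1}^l x^{(r_i)}_{\alpha_{\sigma(i)},\beta_{\tau(i)}}$ (so $L(1,1)=L$). Let $H=\{(\pi,\pi)\}$ where $\pi$ ranges over permutations of $\{1,\dots,l\}$ fixing every index outside $S_M\cap S_N$ and satisfying $r_{\pi(i)}=r_i$ for all $i$. A strict violation of $(M,N)$ is a triple $(p_i,p_j,p_k)$ with distinct indices $i\in S_M$, $j\in S_N$, $k\in S_M\cap S_N$ such that $r_i=r_j=r_k$, $\alpha_i<\alpha_j<\alpha_k$ and $\beta_j<\beta_i<\beta_k$. *)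

From HB Require Import structures.
From mathcomp Require Import all_boot all_algebra fingroup perm.
From mathcomp Require Import mpoly.

Set Implicit Arguments.
Unset Strict Implicit.
Unset Printing Implicit Defensive.

Import GRing.Theory.

Section QuiverVariables.

(* A quiver with vertex set V and arrows h_0, ..., h_{r-1}; arrow h_k goes
   from s k to t k.  m attaches a nonnegative integer to each vertex. *)
Variables (V : finType) (r : nat) (s t : 'I_r -> V) (m : V -> nat).

Definition bipartite : Prop := forall k l : 'I_r, t k <> s l.

(* The variables x^{(k)}_{ij}: k an arrow, i < m_{t(h_k)}, j < m_{s(h_k)}. *)
Definition VarT : Type := {k : 'I_r & ('I_(m (t k)) * 'I_(m (s k)))%type}.
HB.instance Definition _ := Finite.on VarT.

Definition var_arr (x : VarT) : 'I_r := tag x.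
Definition var_row (x : VarT) : nat := (tagged x).1.
Definition var_col (x : VarT) : nat := (tagged x).2.

Definition nvar : nat := #|{: VarT}|.
Definition var_idx (x : VarT) : 'I_nvar := enum_rank x.

Definition find_var (k : 'I_r) (a b : nat) : option VarT :=
  [pick x : VarT | (var_arr x == k) && (var_row x == a) && (var_col x == b)].

(* A lexicographic monomial order is given by a total order on the
   variables, encoded by an injective rank: x > y iff rk x > rk y. *)
Variable rk : VarT -> nat.

(* consistency with every A_gamma: inside each A_gamma the variables strictly
   decrease from left to right along rows and from top to bottom along
   columns.  A_alpha (sink) = [X^(r1) | ... | X^(rs)] (r1 < ... < rs),
   A_beta (source) = vertical stacking of X^(r'1), ..., X^(r't). *)
Definition consistent_order : Prop :=
  forall x y : VarT,
  [/\ (var_arr x = var_arr y -> var_row x = var_row y ->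
         var_col x < var_col y -> rk y < rk x),
      (var_arr x = var_arr y -> var_col x = var_col y ->
         var_row x < var_row y -> rk y < rk x),
      (t (var_arr x) = t (var_arr y) -> var_row x = var_row y ->
         var_arr x < var_arr y -> rk y < rk x) &
      (s (var_arr x) = s (var_arr y) -> var_col x = var_col y ->
         var_arr x < var_arr y -> rk y < rk x)]%N.

Definition mrank (i : 'I_nvar) : nat := rk (enum_val i).

Definition lex_gt (m1 m2 : 'X_{1..nvar}) : Prop :=
  exists i : 'I_nvar, (m2 i < m1 i)%N /\
    forall j : 'I_nvar, (mrank i < mrank j)%N -> m1 j = m2 j.

Variable K : fieldType.

(* the polynomial x^{(k)}_{ab} of K[X] (0 if the indices are out of range,
   which never happens below) *)
Definition xv (k : 'I_r) (a b : nat) : {mpoly K[nvar]} :=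
  if find_var k a b is Some x then 'X_(var_idx x) else 0.

Definition is_LM (p : {mpoly K[nvar]}) (mm : 'X_{1..nvar}) : Prop :=
  mm \in msupp p /\
  forall m' : 'X_{1..nvar}, m' \in msupp p -> m' != mm -> lex_gt mm m'.

(* columns of a sink matrix A_gamma: pairs (k, j), t k = gamma, j < m_{s(h_k)};
   rows of a source matrix A_gamma: pairs (k, i), s k = gamma, i < m_{t(h_k)} *)
Definition ColSink : Type := {k : 'I_r & 'I_(m (s k))}.
HB.instance Definition _ := Finite.on ColSink.
Definition RowSource : Type := {k : 'I_r & 'I_(m (t k))}.
HB.instance Definition _ := Finite.on RowSource.

(* M is a u x u minor of A_gamma (gamma a sink): determinant of the submatrix
   on u distinct rows and u distinct columns (listing rows/columns in another
   order only changes the sign, hence not the leading monomial). *)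
Definition is_minor_sink (g : V) (u : nat) (M : {mpoly K[nvar]}) : Prop :=
  exists (ra : 'I_u -> 'I_(m g)) (ca : 'I_u -> ColSink),
    [/\ injective ra, injective ca, (forall j, t (tag (ca j)) = g) &
        M = (\det (\matrix_(i, j) xv (tag (ca j)) (ra i) (tagged (ca j))))%R].

Definition is_minor_source (g : V) (v : nat) (N : {mpoly K[nvar]}) : Prop :=
  exists (rb : 'I_v -> RowSource) (cb : 'I_v -> 'I_(m g)),
    [/\ injective rb, injective cb, (forall i, s (tag (rb i)) = g) &
        N = (\det (\matrix_(i, j) xv (tag (rb i)) (tagged (rb i)) (cb j)))%R].

(* L(sigma,tau) = prod_i x^{(r_i)}_{alpha_sigma(i), beta_tau(i)}, where
   p i = (alpha_i, beta_i, r_i), as a monomial (exponent vector). *)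
Definition Lmon (l : nat) (p : 'I_l -> VarT) (sg tau : {perm 'I_l})
    : 'X_{1..nvar} :=
  [multinom #|[set i : 'I_l |
      omap var_idx (find_var (var_arr (p i)) (var_row (p (sg i)))
                            (var_col (p (tau i)))) == Some j]| | j < nvar].

End QuiverVariables.

(* Since the monomial order decreases along the rows and the columns of every
   A_gamma, the leading monomial of a minor is the product of a chain of entries:
   the larger variables of LM(M) lie in earlier rows and earlier columns of A_gamma1,
   and likewise for LM(N) in A_gamma2.
   List the factors of L decreasingly and, for (sigma, tau) in G, let d be the first
   index moved by sigma or tau.  The factor x_(alpha_sigma(i), beta_tau(i)) of
   L(sigma, tau) is at most one of x_(p_i), x_(p_sigma(i)), x_(p_tau(i)), unless
   p_sigma(i), p_tau(i), p_i form a strict violation.  Hence either no factor of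
   L(sigma, tau) equals x_(p_d), so that L(sigma, tau) <> L and, barring violations,
   L(sigma, tau) < L; or one does, and its index can be exchanged with d in sigma
   and/or tau without changing L(sigma, tau) while moving fewer indices.  Induction
   on the number of moved indices gives (a) and one half of (b).  Conversely, a strict
   violation (p_i, p_j, p_k) gives L(sigma, tau) > L for sigma = (i k), tau = (j k):
   the new factor x_(alpha_i, beta_j) exceeds every factor that changes. *)

From mathcomp Require Import all_boot all_algebra fingroup perm.
From mathcomp Require Import mpoly zify.

Set Implicit Arguments.
Unset Strict Implicit.
Unset Printing Implicit Defensive.

Import GRing.Theory.

Section Multiplicity.
Variable l : nat.
Implicit Types (f g : 'I_l -> nat) (S : {set 'I_l}).

Definition mult f w := #|[set x | f x == w]|.

Definition mult_lex_gt f g :=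
  exists w, mult g w < mult f w /\ forall w', w < w' -> mult f w' = mult g w'.

Lemma mult_comp_perm f (pi : {perm 'I_l}) w : mult (f \o pi) w = mult f w.
Proof.
rewrite /mult -[RHS](card_preimset _ (@perm_inj _ pi)).
by apply: eq_card => x; rewrite !inE.
Qed.

Lemma mult_lex_gt_asym f g : mult_lex_gt f g -> ~ mult_lex_gt g f.
Proof.
move=> [w [lt_w eq_w]] [w' [lt_w' eq_w']].
case: (ltngtP w w') => [/eq_w|/eq_w'|eq_ww']; last rewrite eq_ww' in lt_w.
- by move=> E; rewrite E ltnn in lt_w'.
- by move=> E; rewrite E ltnn in lt_w.
- by have := ltn_trans lt_w lt_w'; rewrite ltnn.
Qed.

Lemma mult_lt_off f g S k :
  {in ~: S, f =1 g} -> (forall x, x \in S -> g x != f k) -> k \in S ->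
  mult g (f k) < mult f (f k).
Proof.
move=> fg gS kS; apply/proper_card/properP; split.
  apply/subsetP => x; rewrite !inE => /eqP gx.
  have xS : x \notin S by apply/negP => /gS; rewrite gx eqxx.
  by rewrite fg ?inE // gx.
by exists k; rewrite !inE ?eqxx // (negbTE (gS k kS)).
Qed.

Lemma mult_lex_gt_off f g S k :
  {in ~: S, f =1 g} -> (forall x, x \in S -> g x < f k) ->
  (forall x, x \in S -> f x <= f k) -> k \in S -> mult_lex_gt f g.
Proof.
move=> fg gS fS kS; exists (f k); split.
  by apply: mult_lt_off kS => // x /gS; rewrite neq_ltn => ->.
move=> w lt_w; apply: eq_card => x; rewrite !inE.
case: (boolP (x \in S)) => xS; last by rewrite fg ?inE.
have [fx gx] := (leq_ltn_trans (fS x xS) lt_w, ltn_trans (gS x xS) lt_w).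
by rewrite !ltn_eqF.
Qed.

End Multiplicity.

Definition ltn_lex (x y : nat * nat) := (x.1 < y.1) || (x.1 == y.1) && (x.2 < y.2).

Lemma ltn_lex_irr x : ltn_lex x x = false.
Proof. by rewrite /ltn_lex !ltnn andbF. Qed.

Lemma ltn_lex_sub_r x x' y z z' :
  ltn_lex (x, y) (x', z) -> ~~ ltn_lex (x, y) (x', z') -> x = x' /\ z' <= y.
Proof.
rewrite /ltn_lex /= => /orP[lt_x | /andP[/eqP-> _]]; first by rewrite lt_x.
by rewrite ltnn eqxx /= -leqNgt.
Qed.

Lemma tag_ord_eq (I : Type) (F : I -> nat) (c c' : {k : I & 'I_(F k)}) :
  tag c = tag c' -> (tagged c : nat) = tagged c' -> c = c'.
Proof. by case: c c' => k c [k' c'] /= Ek; case: k' / Ek c' => c' /val_inj->. Qed.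

Lemma ltn_lex_total x y : x != y -> ltn_lex x y || ltn_lex y x.
Proof.
by case: x y => [x1 x2] [y1 y2]; rewrite /ltn_lex xpair_eqE /=; lia.
Qed.

Section CellRank.
Variables (V : eqType) (r : nat) (tg sc : 'I_r -> V) (m : V -> nat).

Definition is_cell (k : 'I_r) (a b : nat) := (a < m (tg k)) && (b < m (sc k)).

(* [rank k a b] is the position of x^(k)_(a b) in the monomial order. *)
Variable rank : 'I_r -> nat -> nat -> nat.
Hypothesis rank_inj : forall k a b k' a' b', is_cell k a b -> is_cell k' a' b' ->
  rank k a b = rank k' a' b' -> [/\ k = k', a = a' & b = b'].
Hypothesis rank_right : forall k a b b', is_cell k a b -> is_cell k a b' ->
  b < b' -> rank k a b' < rank k a b.
Hypothesis rank_down : forall k a a' b, is_cell k a b -> is_cell k a' b ->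
  a < a' -> rank k a' b < rank k a b.
Hypothesis rank_right_sink : forall k k' a b b', tg k = tg k' ->
  is_cell k a b -> is_cell k' a b' -> k < k' -> rank k' a b' < rank k a b.
Hypothesis rank_down_source : forall k k' a a' b, sc k = sc k' ->
  is_cell k a b -> is_cell k' a' b -> k < k' -> rank k' a' b < rank k a b.

Lemma rank_sink_row k k' a b b' : tg k = tg k' -> is_cell k a b -> is_cell k' a b' ->
  ltn_lex (k : nat, b) (k' : nat, b') -> rank k' a b' < rank k a b.
Proof.
move=> tgE c c' /orP[lt_k | /andP[/eqP/val_inj eq_k lt_b]]; first exact: rank_right_sink.
by rewrite -eq_k in c' *; apply: rank_right.
Qed.

Lemma rank_source_col k k' a a' b : sc k = sc k' -> is_cell k a b -> is_cell k' a' b ->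
  ltn_lex (k : nat, a) (k' : nat, a') -> rank k' a' b < rank k a b.
Proof.
move=> scE c c' /orP[lt_k | /andP[/eqP/val_inj eq_k lt_a]]; first exact: rank_down_source.
by rewrite -eq_k in c' *; apply: rank_down.
Qed.

Lemma rank_block_lt k a b a' b' : is_cell k a b -> is_cell k a' b' ->
  a <= a' -> b <= b' -> (a < a') || (b < b') -> rank k a' b' < rank k a b.
Proof.
move=> c c' le_a le_b; have /andP[a_k b_k] := c; have /andP[a'_k b'_k] := c'.
have c'' : is_cell k a' b by rewrite /is_cell a'_k.
have le_right a0 : a0 < m (tg k) -> rank k a0 b' <= rank k a0 b.
  move=> a0_k; case: (ltngtP b b') le_b => // [lt_b _ | -> //].
  by apply: ltnW; apply: rank_right; rewrite // /is_cell a0_k.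
have le_down b0 : b0 < m (sc k) -> rank k a' b0 <= rank k a b0.
  move=> b0_k; case: (ltngtP a a') le_a => // [lt_a _ | -> //].
  by apply: ltnW; apply: rank_down; rewrite // /is_cell b0_k andbT.
case/orP=> [lt_a | lt_b].
  by apply: leq_ltn_trans (le_right _ a'_k) _; apply: rank_down.
by apply: leq_trans (le_down _ b_k); apply: rank_right.
Qed.

Variables (l : nat) (arr : 'I_l -> 'I_r) (a b : 'I_l -> nat) (SM SN : pred 'I_l).
Variables (g1 g2 : V).
Implicit Types i j k : 'I_l.

(* [prank i] and [qrank sg tau i] are the ranks of the i-th factors of L and L(sg, tau). *)
Definition prank i := rank (arr i) (a i) (b i).

Hypothesis cellP : forall i, is_cell (arr i) (a i) (b i).
Hypothesis prank_decr : forall i j : 'I_l, i < j -> prank j < prank i.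
Hypothesis SM_sink : forall i, SM i -> tg (arr i) = g1.
Hypothesis SN_source : forall i, SN i -> sc (arr i) = g2.
Hypothesis SM_chain : forall i j, SM i -> SM j -> i < j ->
  a i < a j /\ ltn_lex (arr i : nat, b i) (arr j : nat, b j).
Hypothesis SN_chain : forall i j, SN i -> SN j -> i < j ->
  b i < b j /\ ltn_lex (arr i : nat, a i) (arr j : nat, a j).

Lemma prank_le i j : i <= j -> prank j <= prank i.
Proof.
by case: (ltngtP i j) => // [/prank_decr/ltnW | /val_inj ->].
Qed.

Lemma SM_row_inj i j : SM i -> SM j -> a i = a j -> i = j.
Proof.
move=> Si Sj Ea; case: (ltngtP i j) => [lt | lt | /val_inj //].
- by have [] := SM_chain Si Sj lt; rewrite Ea ltnn.
- by have [] := SM_chain Sj Si lt; rewrite Ea ltnn.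
Qed.

Lemma SM_col_inj i j : SM i -> SM j -> arr i = arr j -> b i = b j -> i = j.
Proof.
move=> Si Sj Ek Eb; case: (ltngtP i j) => [lt | lt | /val_inj //].
- by have [_] := SM_chain Si Sj lt; rewrite Ek Eb ltn_lex_irr.
- by have [_] := SM_chain Sj Si lt; rewrite Ek Eb ltn_lex_irr.
Qed.

Lemma SN_col_inj i j : SN i -> SN j -> b i = b j -> i = j.
Proof.
move=> Si Sj Eb; case: (ltngtP i j) => [lt | lt | /val_inj //].
- by have [] := SN_chain Si Sj lt; rewrite Eb ltnn.
- by have [] := SN_chain Sj Si lt; rewrite Eb ltnn.
Qed.

Lemma SN_row_inj i j : SN i -> SN j -> arr i = arr j -> a i = a j -> i = j.
Proof.
move=> Si Sj Ek Ea; case: (ltngtP i j) => [lt | lt | /val_inj //].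
- by have [_] := SN_chain Si Sj lt; rewrite Ek Ea ltn_lex_irr.
- by have [_] := SN_chain Sj Si lt; rewrite Ek Ea ltn_lex_irr.
Qed.

Definition in_G (sg tau : {perm 'I_l}) :=
  (forall i, ~~ SM i -> sg i = i) /\ (forall i, ~~ SN i -> tau i = i).

Definition in_H (sg tau : {perm 'I_l}) :=
  [/\ sg = tau, (forall i, ~~ (SM i && SN i) -> sg i = i) &
      (forall i, arr (sg i) = arr i)].

Definition strict_violation := exists i j k : 'I_l,
  [/\ [/\ i != j, j != k & i != k], [/\ SM i, SN j, SM k & SN k],
      arr i = arr j /\ arr j = arr k, a i < a j < a k & b j < b i < b k].

Definition qrank (sg tau : {perm 'I_l}) i := rank (arr i) (a (sg i)) (b (tau i)).

Definition moved (sg tau : {perm 'I_l}) := [set i | (sg i != i) || (tau i != i)].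

Definition shuffle_spec (sg tau : {perm 'I_l}) :=
  ((forall w, mult (qrank sg tau) w = mult prank w) -> in_H sg tau) /\
  (mult_lex_gt (qrank sg tau) prank -> strict_violation).

Lemma moved_lt (s : {perm 'I_l}) i : s i != i -> i <= s i -> i < s i.
Proof. by move=> si le_i; rewrite ltn_neqAle le_i andbT eq_sym. Qed.

Section Shuffle.
Variables sg tau : {perm 'I_l}.
Hypothesis sg_tau_G : in_G sg tau.

Lemma SM_moved i : sg i != i -> SM i /\ SM (sg i).
Proof.
have SM_of j : sg j != j -> SM j.
  by move=> sj; apply/negPn/negP => /(proj1 sg_tau_G) ej; rewrite ej eqxx in sj.
by move=> si; split; apply: SM_of; rewrite // (inj_eq perm_inj).
Qed.

Lemma SN_moved i : tau i != i -> SN i /\ SN (tau i).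
Proof.
have SN_of j : tau j != j -> SN j.
  by move=> tj; apply/negPn/negP => /(proj2 sg_tau_G) ej; rewrite ej eqxx in tj.
by move=> ti; split; apply: SN_of; rewrite // (inj_eq perm_inj).
Qed.

Lemma moved_sg i : i \in moved sg tau -> sg i \in moved sg tau.
Proof.
by case: (eqVneq (sg i) i) => [-> // | si _]; rewrite inE (inj_eq perm_inj) si.
Qed.

Lemma moved_tau i : i \in moved sg tau -> tau i \in moved sg tau.
Proof.
by case: (eqVneq (tau i) i) => [-> // | ti _]; rewrite inE (inj_eq perm_inj) ti orbT.
Qed.

Lemma qcell i : is_cell (arr i) (a (sg i)) (b (tau i)).
Proof.
rewrite /is_cell; apply/andP; split.
  case: (eqVneq (sg i) i) => [-> | /SM_moved[Si Ssi]]; first by case/andP: (cellP i).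
  by rewrite (SM_sink Si) -(SM_sink Ssi); case/andP: (cellP (sg i)).
case: (eqVneq (tau i) i) => [-> | /SN_moved[Si Sti]]; first by case/andP: (cellP i).
by rewrite (SN_source Si) -(SN_source Sti); case/andP: (cellP (tau i)).
Qed.

Lemma le_row_sg i : i <= sg i -> a i <= a (sg i).
Proof.
case: (eqVneq (sg i) i) => [-> // | si le_i].
have [Si Ssi] := SM_moved si.
by have [/ltnW] := SM_chain Si Ssi (moved_lt si le_i).
Qed.

Lemma le_col_tau i : i <= tau i -> b i <= b (tau i).
Proof.
case: (eqVneq (tau i) i) => [-> // | ti le_i].
have [Si Sti] := SN_moved ti.
by have [/ltnW] := SN_chain Si Sti (moved_lt ti le_i).
Qed.

Lemma qrank_lt_prank i : i <= sg i -> i <= tau i -> i \in moved sg tau ->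
  qrank sg tau i < prank i.
Proof.
move=> le_s le_t; rewrite inE => mv.
apply: rank_block_lt; [exact: cellP | exact: qcell | exact: le_row_sg | exact: le_col_tau |].
case/orP: mv => [si | ti].
  by have [Si Ssi] := SM_moved si; have [->] := SM_chain Si Ssi (moved_lt si le_s).
have [Si Sti] := SN_moved ti.
by have [-> _] := SN_chain Si Sti (moved_lt ti le_t); rewrite orbT.
Qed.

Lemma qrank_le_prank i : i <= sg i -> i <= tau i -> qrank sg tau i <= prank i.
Proof.
move=> le_s le_t; case: (boolP (i \in moved sg tau)) => [mv | ].
  exact/ltnW/qrank_lt_prank.
by rewrite inE negb_or !negbK => /andP[/eqP si /eqP ti]; rewrite /qrank si ti.
Qed.

Lemma qrank_lt_prank_sg i : sg i < i -> i <= tau i -> qrank sg tau i < prank (sg i).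
Proof.
move=> lt_s le_t; have si : sg i != i by rewrite neq_ltn lt_s.
have [Si Ssi] := SM_moved si; have [_] := SM_chain Ssi Si lt_s.
move=> lex; apply: rank_sink_row; [by rewrite !SM_sink | exact: cellP | exact: qcell |].
move: lex; rewrite /ltn_lex /= => /orP[-> // | /andP[-> lt_b]].
by rewrite (leq_trans lt_b (le_col_tau le_t)) orbT.
Qed.

Lemma qrank_lt_prank_tau i : tau i < i -> i <= sg i -> qrank sg tau i < prank (tau i).
Proof.
move=> lt_t le_s; have ti : tau i != i by rewrite neq_ltn lt_t.
have [Si Sti] := SN_moved ti; have [_] := SN_chain Sti Si lt_t.
move=> lex; apply: rank_source_col; [by rewrite !SN_source | exact: cellP | exact: qcell |].
move: lex; rewrite /ltn_lex /= => /orP[-> // | /andP[-> lt_a]].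
by rewrite (leq_trans lt_a (le_row_sg le_s)) orbT.
Qed.

Lemma qrank_le_or_violation i : sg i < i -> tau i < i ->
  strict_violation \/ (qrank sg tau i <= prank (sg i) \/ qrank sg tau i <= prank (tau i)).
Proof.
move=> lt_s lt_t; have si : sg i != i by rewrite neq_ltn lt_s.
have ti : tau i != i by rewrite neq_ltn lt_t.
have [Si Sj] := SM_moved si; have [Ni Nk] := SN_moved ti.
have [lt_aji lex_r] := SM_chain Sj Si lt_s.
have [lt_bki lex_c] := SN_chain Nk Ni lt_t.
have qcell_i := qcell i.
case: (boolP (ltn_lex (arr (sg i) : nat, b (sg i)) (arr i : nat, b (tau i)))) => [lex | nlex_r].
  by right; left; apply/ltnW/rank_sink_row; rewrite ?SM_sink.
case: (boolP (ltn_lex (arr (tau i) : nat, a (tau i)) (arr i : nat, a (sg i)))) => [lex | nlex_c].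
  by right; right; apply/ltnW/rank_source_col; rewrite ?SN_source.
(* Now q_i is weakly left of p_(sg i) in its row and weakly above p_(tau i) in its
   column; unless it is one of them, (p_(sg i), p_(tau i), p_i) is a strict violation. *)
have [/val_inj Ej le_bkj] := ltn_lex_sub_r lex_r nlex_r.
have [/val_inj Ek le_ajk] := ltn_lex_sub_r lex_c nlex_c.
case: (ltngtP (b (tau i)) (b (sg i))) le_bkj => // [lt_bkj _ | Eb _]; last first.
  by right; left; rewrite /qrank /prank Ej Eb.
case: (ltngtP (a (sg i)) (a (tau i))) le_ajk => // [lt_ajk _ | Ea _]; last first.
  by right; right; rewrite /qrank /prank Ek Ea.
move: lex_r lex_c; rewrite /ltn_lex Ej Ek ltnn eqxx /= => lt_bji lt_aki.
left; exists (sg i), (tau i), i; split.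
- by split=> //; apply: contraTneq lt_ajk => ->; rewrite ltnn.
- by [].
- by rewrite Ej Ek.
- by rewrite lt_ajk.
- by rewrite lt_bkj.
Qed.

Lemma qrank_bounded i : i \in moved sg tau ->
  strict_violation \/ exists2 c, c \in moved sg tau & qrank sg tau i <= prank c.
Proof.
move=> mv; have [mv_s mv_t] := (moved_sg mv, moved_tau mv).
case: (ltnP (sg i) i) => [lt_s | le_s]; case: (ltnP (tau i) i) => [lt_t | le_t].
- case: (qrank_le_or_violation lt_s lt_t) => [| [le | le]]; first by left.
    by right; exists (sg i).
  by right; exists (tau i).
- by right; exists (sg i) => //; apply/ltnW/qrank_lt_prank_sg.
- by right; exists (tau i) => //; apply/ltnW/qrank_lt_prank_tau.
- by right; exists i => //; apply: qrank_le_prank.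
Qed.

Lemma qrank_lt_sg_fixed i : sg i = i -> tau i != i ->
  exists2 c, c \in moved sg tau & qrank sg tau i < prank c.
Proof.
move=> si ti; have mv : i \in moved sg tau by rewrite inE ti orbT.
have le_s : i <= sg i by rewrite si.
case: (ltnP (tau i) i) => [lt_t | le_t].
  by exists (tau i); [exact: moved_tau | exact: qrank_lt_prank_tau].
by exists i => //; apply: qrank_lt_prank.
Qed.

Lemma qrank_lt_tau_fixed i : tau i = i -> sg i != i ->
  exists2 c, c \in moved sg tau & qrank sg tau i < prank c.
Proof.
move=> ti si; have mv : i \in moved sg tau by rewrite inE si.
have le_t : i <= tau i by rewrite ti.
case: (ltnP (sg i) i) => [lt_s | le_s].
  by exists (sg i); [exact: moved_sg | exact: qrank_lt_prank_sg].
by exists i => //; apply: qrank_lt_prank.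
Qed.

Section Hit.
Variables d i : 'I_l.
Hypothesis d_moved : d \in moved sg tau.
Hypothesis d_min : forall c, c \in moved sg tau -> d <= c.
Hypothesis i_moved : i \in moved sg tau.
Hypothesis hit : qrank sg tau i = prank d.

Lemma hit_moved : sg i != i /\ tau i != i.
Proof.
have no_gt c : c \in moved sg tau -> ~ qrank sg tau i < prank c.
  by move=> mc; rewrite hit ltnNge (prank_le (d_min mc)).
split; apply/negP => /eqP fixed.
  have ti : tau i != i by move: i_moved; rewrite inE fixed eqxx.
  by have [c] := qrank_lt_sg_fixed fixed ti; move/no_gt.
have si : sg i != i by move: i_moved; rewrite inE fixed eqxx orbF.
by have [c] := qrank_lt_tau_fixed fixed si; move/no_gt.
Qed.

Lemma hit_cell : [/\ arr i = arr d, a (sg i) = a d & b (tau i) = b d].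
Proof. exact: rank_inj (qcell i) (cellP d) hit. Qed.

Lemma hit_sg : SM d -> sg i = d.
Proof.
move=> Sd; have [_ Ssi] := SM_moved hit_moved.1.
by case: hit_cell => _ Ea _; apply: SM_row_inj.
Qed.

Lemma hit_tau : SN d -> tau i = d.
Proof.
move=> Nd; have [_ Nti] := SN_moved hit_moved.2.
by case: hit_cell => _ _ Eb; apply: SN_col_inj.
Qed.

(* Exchanging d and i in sg (if d is in S_M) and in tau (if d is in S_N) fixes d and
   only permutes the factors of L(sg, tau). *)
Let t := tperm d i.
Let sg' : {perm 'I_l} := if SM d then (t * sg)%g else sg.
Let tau' : {perm 'I_l} := if SN d then (t * tau)%g else tau.

Let arr_t x : arr (t x) = arr x.
Proof. by rewrite /t; case: tpermP => [-> | -> | //]; case: hit_cell => ->. Qed.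

Let row_sg' x : a (sg' x) = a (sg (t x)).
Proof.
rewrite /sg'; case: ifP => [_ | /negbT Sd]; first by rewrite permM.
have sd : sg d = d := (proj1 sg_tau_G) d Sd.
by rewrite /t; case: tpermP => [-> | -> | //]; case: hit_cell => _ ->; rewrite sd.
Qed.

Let col_tau' x : b (tau' x) = b (tau (t x)).
Proof.
rewrite /tau'; case: ifP => [_ | /negbT Nd]; first by rewrite permM.
have td : tau d = d := (proj2 sg_tau_G) d Nd.
by rewrite /t; case: tpermP => [-> | -> | //]; case: hit_cell => _ _ ->; rewrite td.
Qed.

Let sg'_off x : x != d -> x != i -> sg' x = sg x.
Proof. by move=> xd xi; rewrite /sg'; case: ifP; rewrite // permM /t tpermD 1?eq_sym. Qed.

Let tau'_off x : x != d -> x != i -> tau' x = tau x.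
Proof. by move=> xd xi; rewrite /tau'; case: ifP; rewrite // permM /t tpermD 1?eq_sym. Qed.

Let sg'_d : sg' d = d.
Proof.
rewrite /sg'; case: ifP => [Sd | /negbT Sd]; last exact: (proj1 sg_tau_G).
by rewrite permM /t tpermL hit_sg.
Qed.

Let tau'_d : tau' d = d.
Proof.
rewrite /tau'; case: ifP => [Nd | /negbT Nd]; last exact: (proj2 sg_tau_G).
by rewrite permM /t tpermL hit_tau.
Qed.

Let G' : in_G sg' tau'.
Proof.
have [[Si _] [Ni _]] := (SM_moved hit_moved.1, SN_moved hit_moved.2).
split=> x Sx.
  case: (boolP (SM d)) => Sd; last by rewrite /sg' (negbTE Sd); apply: (proj1 sg_tau_G).
  by rewrite sg'_off ?(proj1 sg_tau_G) //; apply: contraNneq Sx => ->.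
case: (boolP (SN d)) => Nd; last by rewrite /tau' (negbTE Nd); apply: (proj2 sg_tau_G).
by rewrite tau'_off ?(proj2 sg_tau_G) //; apply: contraNneq Sx => ->.
Qed.

Let moved'_lt : #|moved sg' tau'| < #|moved sg tau|.
Proof.
apply/proper_card/properP; split; last by exists d; rewrite // inE sg'_d tau'_d eqxx.
apply/subsetP => x; rewrite !inE.
case: (eqVneq x d) => [-> | xd]; first by rewrite sg'_d tau'_d eqxx.
case: (eqVneq x i) => [-> _ | xi]; first by move: i_moved; rewrite inE.
by rewrite sg'_off ?tau'_off.
Qed.

Let qrank' x : qrank sg' tau' x = qrank sg tau (t x).
Proof. by rewrite /qrank row_sg' col_tau' arr_t. Qed.

Let in_H_both : SM d -> SN d -> in_H sg' tau' -> in_H sg tau.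
Proof.
move=> Sd Nd [E fixH arrH]; have [si ti] := hit_moved.
have [[Si _] [Ni _]] := (SM_moved si, SN_moved ti).
have sgE x : sg x = sg' (t x) by rewrite /sg' Sd permM /t tpermK.
split.
- by apply/permP => x; rewrite sgE E /tau' Nd permM /t tpermK.
- move=> x SNx; have xd : x != d by apply: contraNneq SNx => ->; rewrite Sd Nd.
  have xi : x != i by apply: contraNneq SNx => ->; rewrite Si Ni.
  by rewrite -sg'_off // fixH.
- by move=> x; rewrite sgE arrH arr_t.
Qed.

Let no_in_H_SM : SM d -> ~~ SN d -> ~ in_H sg' tau'.
Proof.
move=> Sd Nd [E _ arrH].
have td : tau d = d := (proj2 sg_tau_G) d Nd.
have sd : sg d != d by move: d_moved; rewrite inE td eqxx orbF.
have [_ Ssd] := SM_moved sd.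
have Eti : tau i = sg d.
  have := congr1 (fun s : {perm 'I_l} => s i) E.
  by rewrite /= /sg' /tau' Sd (negbTE Nd) permM /t tpermR.
case: hit_cell => Ek _ Eb.
have := arrH i; rewrite E /tau' (negbTE Nd) Eti Ek => Ek'.
by move: sd; rewrite (SM_col_inj Ssd Sd Ek' _) ?eqxx // -Eti.
Qed.

Let no_in_H_SN : ~~ SM d -> SN d -> ~ in_H sg' tau'.
Proof.
move=> Sd Nd [E _ arrH].
have sd : sg d = d := (proj1 sg_tau_G) d Sd.
have td : tau d != d by move: d_moved; rewrite inE sd eqxx.
have [_ Ntd] := SN_moved td.
have Esi : sg i = tau d.
  have := congr1 (fun s : {perm 'I_l} => s i) E.
  by rewrite /= /sg' /tau' Nd (negbTE Sd) permM /t tpermR.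
case: hit_cell => Ek Ea _.
have := arrH i; rewrite /sg' (negbTE Sd) Esi Ek => Ek'.
by move: td; rewrite (SN_row_inj Ntd Nd Ek' _) ?eqxx // -Esi.
Qed.

Lemma moved_swap : exists sg' tau' : {perm 'I_l},
  [/\ in_G sg' tau', #|moved sg' tau'| < #|moved sg tau|,
      forall x, qrank sg' tau' x = qrank sg tau (tperm d i x) &
      in_H sg' tau' -> in_H sg tau].
Proof.
exists sg', tau'; split=> // H'.
have: SM d || SN d.
  by move: d_moved; rewrite inE => /orP[/SM_moved[-> _] | /SN_moved[-> _]]; rewrite ?orbT.
case: (boolP (SM d)) => Sd; case: (boolP (SN d)) => Nd //= _.
- exact: in_H_both.
- by case: (no_in_H_SM Sd Nd H').
- by case: (no_in_H_SN Sd Nd H').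
Qed.

End Hit.

Lemma shuffle_spec_no_hit d : d \in moved sg tau -> (forall c, c \in moved sg tau -> d <= c) ->
  (forall x, x \in moved sg tau -> qrank sg tau x != prank d) -> shuffle_spec sg tau.
Proof.
move=> d_moved d_min no_hit.
have off : {in ~: moved sg tau, prank =1 qrank sg tau}.
  by move=> x; rewrite !inE negb_or !negbK => /andP[/eqP sx /eqP tx]; rewrite /qrank sx tx.
split=> [Emult | lex].
  by have := mult_lt_off off no_hit d_moved; rewrite Emult ltnn.
case: (boolP [forall x in moved sg tau, qrank sg tau x < prank d]) => [/forall_inP below | ].
  case: (mult_lex_gt_asym lex); apply: (mult_lex_gt_off off below _ d_moved).
  by move=> x /d_min/prank_le.
rewrite negb_forall_in => /exists_inP[x mv]; rewrite -leqNgt => le_dx.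
case: (qrank_bounded mv) => [// | [c mc le_xc]].
have := leq_trans le_xc (prank_le (d_min _ mc)).
by rewrite leq_eqVlt (negbTE (no_hit x mv)) ltnNge le_dx.
Qed.

End Shuffle.

Lemma shuffle_spec1 : shuffle_spec 1 1.
Proof.
have E w : mult (qrank 1 1) w = mult prank w.
  by apply: eq_card => x; rewrite !inE /qrank !perm1.
split=> [_ | [w [lt_w _]]]; first by split=> // x; rewrite perm1.
by rewrite E ltnn in lt_w.
Qed.

Lemma shuffle_specP sg tau : in_G sg tau -> shuffle_spec sg tau.
Proof.
have [n] := ubnP #|moved sg tau|; elim: n sg tau => // n IH sg tau lt_n G.
case: (set_0Vmem (moved sg tau)) => [M0 | [x0 mv0]].
  have [-> ->] : sg = 1%g /\ tau = 1%g.
    by split; apply/permP => x; apply/eqP; have := in_set0 x;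
      rewrite -M0 inE perm1 => /norP[/negPn ? /negPn ?].
  exact: shuffle_spec1.
have [d d_moved d_min] := arg_minnP (fun x : 'I_l => val x) mv0.
case: (boolP [exists x in moved sg tau, qrank sg tau x == prank d]); last first.
  by rewrite negb_exists_in => /forall_inP no_hit; apply: shuffle_spec_no_hit d_moved _ _.
case/exists_inP=> i i_moved /eqP hit.
have [sg' [tau' [G' lt' q' H']]] := moved_swap G d_moved d_min i_moved hit.
have [IHa IHb] := IH sg' tau' (leq_trans lt' lt_n) G'.
have Emult w : mult (qrank sg' tau') w = mult (qrank sg tau) w.
  by rewrite -[RHS](mult_comp_perm _ (tperm d i)); apply: eq_card => x; rewrite !inE q'.
split=> [E | [w [lt_w eq_w]]]; first by apply/H'/IHa => w; rewrite Emult.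
by apply: IHb; exists w; rewrite !Emult; split=> // w' /eq_w; rewrite Emult.
Qed.

Lemma mult_qrank_eq_iff sg tau : in_G sg tau ->
  (forall w, mult (qrank sg tau) w = mult prank w) <-> in_H sg tau.
Proof.
move=> G; split=> [|[<- _ arr_sg] w]; first exact: (shuffle_specP G).1.
rewrite -(mult_comp_perm prank sg); apply: eq_card => x.
by rewrite !inE /qrank /prank /= arr_sg.
Qed.

Lemma strict_violation_iff : strict_violation <->
  exists sg tau, in_G sg tau /\ mult_lex_gt (qrank sg tau) prank.
Proof.
split=> [| [sg [tau [G lex]]]]; last exact: (shuffle_specP G).2.
case=> i [j [k [[ij jk ik] [Si Nj Sk Nk] [Eij Ejk] /andP[lt_aij lt_ajk] /andP[lt_bji lt_bik]]]].
have [ji kj ki] : [/\ j != i, k != j & k != i] by rewrite !(eq_sym k) eq_sym.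
exists (tperm i k), (tperm j k); split.
  by split=> x Sx; apply: tpermD; apply: contraNneq Sx => <-.
set ro := arr k in Ejk; have Eik : arr i = ro by rewrite Eij.
have cell x y : arr x = ro -> arr y = ro -> is_cell ro (a x) (b y).
  move=> Ex Ey; have /andP[ax _] := cellP x; have /andP[_ by_] := cellP y.
  by rewrite /is_cell -{1}Ex ax -Ey by_.
have below x y : arr x = ro -> arr y = ro -> a i <= a x -> b j <= b y ->
    (a i < a x) || (b j < b y) -> rank ro (a x) (b y) < rank ro (a i) (b j).
  by move=> Ex Ey; apply: rank_block_lt; apply: cell.
have qk : qrank (tperm i k) (tperm j k) k = rank ro (a i) (b j) by rewrite /qrank !tpermR.
apply: (@mult_lex_gt_off _ _ _ [set i; j; k] k).
- move=> x; rewrite !inE !negb_or => /andP[/andP[xi xj] xk].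
  by rewrite /qrank /prank !tpermD 1?eq_sym.
- move=> x; rewrite qk !inE => /orP[/orP[] | ] /eqP->;
    by rewrite /prank ?Eik ?Ejk; apply: below => //; lia.
- move=> x; rewrite qk !inE => /orP[/orP[] | ] /eqP->; rewrite /qrank ?tpermL ?tpermR.
  + by rewrite tpermD // Eik; apply/ltnW/below => //; lia.
  + by rewrite tpermD // Ejk; apply/ltnW/below => //; lia.
  + by [].
- by rewrite !inE eqxx !orbT.
Qed.

End CellRank.

Section DetOfVariables.
Variables (K : fieldType) (n u : nat) (f : 'I_u -> 'I_u -> 'I_n).
Hypothesis f_inj : forall i j i' j', f i j = f i' j' -> i = i' /\ j = j'.

Definition var_mx : 'M[{mpoly K[n]}]_u := \matrix_(i, j) 'X_(f i j).

Definition perm_mono (pi : 'S_u) : 'X_{1..n} :=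
  [multinom \sum_(x < u) (f x (pi x) == j) | j < n].

Lemma perm_monoE (pi : 'S_u) : (\prod_i var_mx i (pi i) = 'X_[perm_mono pi])%R.
Proof.
have -> : perm_mono pi = (\sum_(x < u) U_(f x (pi x)))%MM.
  by apply/mnmP => j; rewrite mnmE mnm_sumE; apply: eq_bigr => x _; rewrite mnm1E.
rewrite (big_morph _ (@mpolyXD _ _) (@mpolyX0 _ _)).
by apply: eq_bigr => x _; rewrite mxE.
Qed.

Lemma mcoeff_det_var_mx mm :
  ((\det var_mx)@_mm = \sum_(pi : 'S_u) (-1) ^+ pi * (perm_mono pi == mm)%:R)%R.
Proof.
rewrite /determinant raddf_sum; apply: eq_bigr => pi _.
by rewrite perm_monoE /= -(rmorph_sign (@mpolyC n K)) mcoeffCM mcoeffX.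
Qed.

Lemma perm_mono_inj : injective perm_mono.
Proof.
move=> pi pi' E; apply/permP => x.
have : 0 < perm_mono pi' (f x (pi x)) by rewrite -E mnmE (bigD1 x) //= eqxx.
rewrite mnmE; case: (pickP (fun y => f y (pi' y) == f x (pi x))).
  by move=> y /eqP/f_inj[-> ->].
by move=> none; rewrite big1 // => y _; rewrite none.
Qed.

Lemma msupp_det_var_mx mm : mm \in msupp (\det var_mx) <-> exists pi, mm = perm_mono pi.
Proof.
rewrite mcoeff_msupp mcoeff_det_var_mx; split.
  case: (pickP (fun pi => perm_mono pi == mm)) => [pi /eqP <- _ | none]; first by exists pi.
  by rewrite big1 ?eqxx // => pi _; rewrite none mulr0.
case=> pi ->; rewrite (bigD1 pi) //= eqxx mulr1 big1 ?addr0 ?signr_eq0 // => pi' ne.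
by rewrite (inj_eq perm_mono_inj) (negbTE ne) mulr0.
Qed.

Lemma perm_mono_gt0 (pi : 'S_u) j : 0 < perm_mono pi j -> exists x, f x (pi x) = j.
Proof.
rewrite mnmE; case: (pickP (fun x => f x (pi x) == j)) => [x /eqP | none]; first by exists x.
by rewrite big1 // => x _; rewrite none.
Qed.

End DetOfVariables.

Section Quiver.
Variables (V : finType) (r : nat) (s t : 'I_r -> V) (m : V -> nat).
Local Notation VT := (VarT s t m).
Local Notation nv := (nvar s t m).
Variable rk : VT -> nat.
Hypothesis rk_inj : injective rk.
Hypothesis rk_cons : consistent_order rk.

Lemma var_eq (x y : VT) : var_arr x = var_arr y -> var_row x = var_row y ->
  var_col x = var_col y -> x = y.
Proof.
case: x y => k [i j] [k' [i' j']]; rewrite /var_arr /var_row /var_col /= => Ek.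
by case: k' / Ek i' j' => i' j' /val_inj-> /val_inj->.
Qed.

Lemma find_varK (x : VT) : find_var s t m (var_arr x) (var_row x) (var_col x) = Some x.
Proof.
rewrite /find_var; case: pickP => [y /andP[/andP[/eqP Ek /eqP Ei] /eqP Ej] | none].
  by rewrite (var_eq Ek Ei Ej).
by have := none x; rewrite !eqxx.
Qed.

Lemma var_idx_inj : injective (@var_idx _ _ s t m).
Proof. exact: enum_rank_inj. Qed.

Lemma mrank_var_idx (x : VT) : mrank rk (var_idx x) = rk x.
Proof. by rewrite /mrank /var_idx enum_rankK. Qed.

Lemma mrank_inj : injective (mrank rk).
Proof. by move=> i j /rk_inj /enum_val_inj. Qed.

Lemma xvE (K : fieldType) (x : VT) :
  xv s t m K (var_arr x) (var_row x) (var_col x) = 'X_(var_idx x).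
Proof. by rewrite /xv find_varK. Qed.

Lemma lex_gt_irr mm : ~ lex_gt rk mm mm.
Proof. by case=> i []; rewrite ltnn. Qed.

Lemma lex_gt_asym m1 m2 : lex_gt rk m1 m2 -> ~ lex_gt rk m2 m1.
Proof.
case=> i [lt_i eq_i] [j [lt_j eq_j]].
case: (ltngtP (mrank rk i) (mrank rk j)) => [/eq_i | /eq_j | /mrank_inj Eij].
- by move=> E; rewrite E ltnn in lt_j.
- by move=> E; rewrite E ltnn in lt_i.
- by rewrite Eij in lt_i; have := ltn_trans lt_i lt_j; rewrite ltnn.
Qed.

(* Off the cells the value 0 is junk; it is never used there. *)
Definition var_rank (k : 'I_r) (a b : nat) :=
  if find_var s t m k a b is Some x then rk x else 0.

Lemma is_cell_var (x : VT) : is_cell t s m (var_arr x) (var_row x) (var_col x).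
Proof. by case: x => k [i j]; rewrite /is_cell /var_row /var_col /= !ltn_ord. Qed.

Lemma var_rank_var (x : VT) : var_rank (var_arr x) (var_row x) (var_col x) = rk x.
Proof. by rewrite /var_rank find_varK. Qed.

Lemma cell_var k a b : is_cell t s m k a b ->
  exists x : VT, [/\ var_arr x = k, var_row x = a & var_col x = b].
Proof.
by case/andP=> a_k b_k; exists (existT _ k (Ordinal a_k, Ordinal b_k)).
Qed.

Lemma find_var_idx k a b j : is_cell t s m k a b ->
  (omap (@var_idx _ _ s t m) (find_var s t m k a b) == Some j) = (var_rank k a b == mrank rk j).
Proof.
case/cell_var=> x [<- <- <-]; rewrite var_rank_var find_varK /=.
by rewrite -(mrank_var_idx x) (inj_eq mrank_inj) (inj_eq Some_inj).
Qed.

Section VarRank.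
Let cell_rank k a b : is_cell t s m k a b ->
  exists x : VT, [/\ var_rank k a b = rk x, var_arr x = k, var_row x = a & var_col x = b].
Proof. by case/cell_var=> x [<- <- <-]; exists x; rewrite var_rank_var. Qed.

Lemma var_rank_inj k a b k' a' b' : is_cell t s m k a b -> is_cell t s m k' a' b' ->
  var_rank k a b = var_rank k' a' b' -> [/\ k = k', a = a' & b = b'].
Proof.
move=> /cell_rank[x [-> <- <- <-]] /cell_rank[y [-> <- <- <-]].
by move/rk_inj->.
Qed.

Lemma var_rank_right k a b b' : is_cell t s m k a b -> is_cell t s m k a b' ->
  b < b' -> var_rank k a b' < var_rank k a b.
Proof.
move=> /cell_rank[x [-> Ek Ea Eb]] /cell_rank[y [-> Fk Fa Fb]] lt_b.
by case: (rk_cons x y) => + _ _ _; apply; rewrite ?Ek ?Fk ?Ea ?Fa ?Eb ?Fb.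
Qed.

Lemma var_rank_down k a a' b : is_cell t s m k a b -> is_cell t s m k a' b ->
  a < a' -> var_rank k a' b < var_rank k a b.
Proof.
move=> /cell_rank[x [-> Ek Ea Eb]] /cell_rank[y [-> Fk Fa Fb]] lt_a.
by case: (rk_cons x y) => _ + _ _; apply; rewrite ?Ek ?Fk ?Ea ?Fa ?Eb ?Fb.
Qed.

Lemma var_rank_right_sink k k' a b b' : t k = t k' ->
  is_cell t s m k a b -> is_cell t s m k' a b' -> k < k' -> var_rank k' a b' < var_rank k a b.
Proof.
move=> tE /cell_rank[x [-> Ek Ea Eb]] /cell_rank[y [-> Fk Fa Fb]] lt_k.
by case: (rk_cons x y) => _ _ + _; apply; rewrite ?Ek ?Fk ?Ea ?Fa ?Eb ?Fb.
Qed.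

Lemma var_rank_down_source k k' a a' b : s k = s k' ->
  is_cell t s m k a b -> is_cell t s m k' a' b -> k < k' -> var_rank k' a' b < var_rank k a b.
Proof.
move=> sE /cell_rank[x [-> Ek Ea Eb]] /cell_rank[y [-> Fk Fa Fb]] lt_k.
by case: (rk_cons x y) => _ _ _; apply; rewrite ?Ek ?Fk ?Ea ?Fa ?Eb ?Fb.
Qed.
End VarRank.

Section LeadingPermutation.
Variables (K : fieldType) (u : nat) (f : 'I_u -> 'I_u -> 'I_nv).
Hypothesis f_inj : forall i j i' j', f i j = f i' j' -> i = i' /\ j = j'.

Lemma perm_mono_tperm_gt (pi : 'S_u) i i' : i != i' ->
  mrank rk (f i (pi i)) < mrank rk (f i (pi i')) ->
  mrank rk (f i' (pi i')) < mrank rk (f i (pi i')) ->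
  mrank rk (f i' (pi i)) < mrank rk (f i (pi i')) ->
  lex_gt rk (perm_mono f (tperm i i' * pi)) (perm_mono f pi).
Proof.
move=> ne lt_ii lt_i'i' lt_i'i; set J := f i (pi i') in lt_ii lt_i'i' lt_i'i *.
exists J; split.
  rewrite !mnmE big1 => [|x _]; first by rewrite (bigD1 i) //= permM tpermL eqxx.
  apply/eqP; rewrite eqb0; apply/eqP => /f_inj[Ex /perm_inj Ex'].
  by move: ne; rewrite -Ex Ex' eqxx.
move=> j lt_J; rewrite !mnmE; apply: eq_bigr => x _; rewrite permM.
have neJ y : mrank rk y <= mrank rk J -> (y == j) = false.
  by move=> le_y; apply/eqP => Ey; move: (leq_ltn_trans le_y lt_J); rewrite Ey ltnn.
by case: tpermP => [-> | -> | //]; rewrite !neJ // ltnW.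
Qed.

Variables (ltr ltc : rel 'I_u).
Hypothesis ltr_total : forall i i', i != i' -> ltr i i' || ltr i' i.
Hypothesis ltc_total : forall j j', j != j' -> ltc j j' || ltc j' j.
Hypothesis mrank_down : forall i i' j, ltr i i' -> mrank rk (f i' j) < mrank rk (f i j).
Hypothesis mrank_right : forall i j j', ltc j j' -> mrank rk (f i j') < mrank rk (f i j).

Lemma LM_det_var_mx lm : is_LM rk (\det (var_mx K f)) lm ->
  exists pi, lm = perm_mono f pi /\ forall i i',
    mrank rk (f i' (pi i')) < mrank rk (f i (pi i)) -> ltr i i' && ltc (pi i) (pi i').
Proof.
case=> lm_supp lm_max; have [pi lmE] := (msupp_det_var_mx K f_inj lm).1 lm_supp.
(* An inversion of pi would make the swapped monomial larger than the leading one. *)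
have mono i i' : ltr i i' -> ltc (pi i) (pi i').
  move=> lt_i; have ne : i != i'.
    by apply/eqP => Ei; have := mrank_down (pi i) lt_i; rewrite Ei ltnn.
  apply/negPn/negP => nlt.
  have : ltc (pi i') (pi i) || ltc (pi i) (pi i').
    by apply: ltc_total; rewrite (inj_eq perm_inj) eq_sym.
  rewrite (negbTE nlt) orbF => lt_c.
  have gt := perm_mono_tperm_gt ne (mrank_right i lt_c) (mrank_down (pi i') lt_i)
    (ltn_trans (mrank_down (pi i) lt_i) (mrank_right i lt_c)).
  have supp' : perm_mono f (tperm i i' * pi) \in msupp (\det (var_mx K f)).
    by apply/(msupp_det_var_mx K f_inj); eexists.
  have ne' : perm_mono f (tperm i i' * pi) != lm.
    by apply/eqP => E; move: gt; rewrite E lmE; apply: lex_gt_irr.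
  by apply: lex_gt_asym gt; rewrite -lmE; apply: lm_max.
exists pi; split=> // i i' lt_rk.
have ne : i != i' by apply: contraTneq lt_rk => ->; rewrite ltnn.
case/orP: (ltr_total ne) => [lt_i | lt_i]; first by rewrite lt_i mono.
have := ltn_trans (mrank_down (pi i) lt_i) (mrank_right i' (mono _ _ lt_i)).
by rewrite ltnNge (ltnW lt_rk).
Qed.

End LeadingPermutation.

Definition in_LM (lm : 'X_{1..nv}) (x : VT) := 0 < lm (var_idx x).

Lemma in_LM_perm_mono u (X : 'I_u -> 'I_u -> VT) (pi : 'S_u) x :
  in_LM (perm_mono (fun i j => var_idx (X i j)) pi) x -> exists i, x = X i (pi i).
Proof. by case/perm_mono_gt0=> i /var_idx_inj <-; exists i. Qed.

Lemma sink_minor_LM (K : fieldType) g u (M : {mpoly K[nv]}) lm :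
  is_minor_sink g u M -> is_LM rk M lm ->
  (forall x, in_LM lm x -> t (var_arr x) = g) /\
  (forall x y, in_LM lm x -> in_LM lm y -> rk y < rk x ->
     var_row x < var_row y /\
     ltn_lex (var_arr x : nat, var_col x) (var_arr y : nat, var_col y)).
Proof.
case=> ra [ca [ra_inj ca_inj ca_g ->]] LM.
pose X i j : VT :=
  existT _ (tag (ca j)) (cast_ord (esym (congr1 m (ca_g j))) (ra i), tagged (ca j)).
pose f i j := var_idx (X i j).
have f_inj i j i' j' : f i j = f i' j' -> i = i' /\ j = j'.
  rewrite /f => /var_idx_inj E; split.
    by apply/ra_inj/val_inj; exact: (congr1 (@var_row _ _ s t m) E).
  apply/ca_inj/tag_ord_eq; first exact: (congr1 (@var_arr _ _ s t m) E).
  exact: (congr1 (@var_col _ _ s t m) E).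
have {}LM : is_LM rk (\det (var_mx K f))%R lm.
  move: LM; congr (is_LM _ (determinant _) _); apply/matrixP => i j.
  by rewrite !mxE; exact: (xvE K (X i j)).
pose ltc j j' :=
  ltn_lex (tag (ca j) : nat, tagged (ca j) : nat) (tag (ca j') : nat, tagged (ca j') : nat).
have ltr_total i i' : i != i' -> (ra i < ra i') || (ra i' < ra i).
  by move=> ne; rewrite -neq_ltn; apply: contra ne => /eqP/val_inj/ra_inj->.
have ltc_total j j' : j != j' -> ltc j j' || ltc j' j.
  move=> ne; apply: ltn_lex_total; apply: contra ne => /eqP[Ek Ec].
  by apply/eqP/ca_inj/tag_ord_eq; [apply: val_inj | ].
have down i i' j : ra i < ra i' -> mrank rk (f i' j) < mrank rk (f i j).
  by move=> lt_r; rewrite !mrank_var_idx; case: (rk_cons (X i j) (X i' j)) => _ + _ _; apply.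
have right i j j' : ltc j j' -> mrank rk (f i j') < mrank rk (f i j).
  rewrite !mrank_var_idx => /orP[lt_k | /andP[/eqP/val_inj Ek lt_c]].
    by case: (rk_cons (X i j) (X i j')) => _ _ + _; apply; rewrite //= !ca_g.
  by case: (rk_cons (X i j) (X i j')) => + _ _ _; apply.
have [pi [lmE chain]] := LM_det_var_mx f_inj ltr_total ltc_total down right LM.
rewrite lmE; split=> [x /in_LM_perm_mono[i ->] | x y].
  exact: ca_g.
case/in_LM_perm_mono=> i -> /in_LM_perm_mono[i' ->].
by rewrite -!mrank_var_idx => /chain/andP.
Qed.

Lemma source_minor_LM (K : fieldType) g v (N : {mpoly K[nv]}) lm :
  is_minor_source g v N -> is_LM rk N lm ->
  (forall x, in_LM lm x -> s (var_arr x) = g) /\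
  (forall x y, in_LM lm x -> in_LM lm y -> rk y < rk x ->
     var_col x < var_col y /\
     ltn_lex (var_arr x : nat, var_row x) (var_arr y : nat, var_row y)).
Proof.
case=> rb [cb [rb_inj cb_inj rb_g ->]] LM.
pose X i j : VT :=
  existT _ (tag (rb i)) (tagged (rb i), cast_ord (esym (congr1 m (rb_g i))) (cb j)).
pose f i j := var_idx (X i j).
have f_inj i j i' j' : f i j = f i' j' -> i = i' /\ j = j'.
  rewrite /f => /var_idx_inj E; split; last first.
    by apply/cb_inj/val_inj; exact: (congr1 (@var_col _ _ s t m) E).
  apply/rb_inj/tag_ord_eq; first exact: (congr1 (@var_arr _ _ s t m) E).
  exact: (congr1 (@var_row _ _ s t m) E).
have {}LM : is_LM rk (\det (var_mx K f))%R lm.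
  move: LM; congr (is_LM _ (determinant _) _); apply/matrixP => i j.
  by rewrite !mxE; exact: (xvE K (X i j)).
pose ltr i i' :=
  ltn_lex (tag (rb i) : nat, tagged (rb i) : nat) (tag (rb i') : nat, tagged (rb i') : nat).
have ltr_total i i' : i != i' -> ltr i i' || ltr i' i.
  move=> ne; apply: ltn_lex_total; apply: contra ne => /eqP[Ek Ec].
  by apply/eqP/rb_inj/tag_ord_eq; [apply: val_inj | ].
have ltc_total j j' : j != j' -> (cb j < cb j') || (cb j' < cb j).
  by move=> ne; rewrite -neq_ltn; apply: contra ne => /eqP/val_inj/cb_inj->.
have down i i' j : ltr i i' -> mrank rk (f i' j) < mrank rk (f i j).
  rewrite !mrank_var_idx => /orP[lt_k | /andP[/eqP/val_inj Ek lt_r]].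
    by case: (rk_cons (X i j) (X i' j)) => _ _ _; apply; rewrite //= !rb_g.
  by case: (rk_cons (X i j) (X i' j)) => _ + _ _; apply.
have right i j j' : cb j < cb j' -> mrank rk (f i j') < mrank rk (f i j).
  by move=> lt_c; rewrite !mrank_var_idx; case: (rk_cons (X i j) (X i j')) => + _ _ _; apply.
have [pi [lmE chain]] := LM_det_var_mx f_inj ltr_total ltc_total down right LM.
rewrite lmE; split=> [x /in_LM_perm_mono[i ->] | x y].
  exact: rb_g.
case/in_LM_perm_mono=> i -> /in_LM_perm_mono[i' ->].
by rewrite -!mrank_var_idx => /chain/andP[].
Qed.

Section RankMultinom.
Variable l : nat.
Implicit Types f g : 'I_l -> nat.

Definition rank_valued f := forall i, exists j, f i = mrank rk j.

Lemma mult_off_rank f w : rank_valued f -> (forall j, w != mrank rk j) -> mult f w = 0.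
Proof.
move=> fR wR; apply/eqP; rewrite cards_eq0; apply/eqP/setP => i; rewrite !inE.
by have [j ->] := fR i; rewrite eq_sym (negbTE (wR j)).
Qed.

Lemma rank_multinom_inj f g : rank_valued f -> rank_valued g ->
  [multinom mult f (mrank rk j) | j < nv] = [multinom mult g (mrank rk j) | j < nv] ->
  forall w, mult f w = mult g w.
Proof.
move=> fR gR E w; case: (boolP [exists j, w == mrank rk j]) => [/existsP[j /eqP->] | ].
  by have := congr1 (fun mm : 'X_{1..nv} => mm j) E; rewrite !mnmE.
by rewrite negb_exists => /forallP wR; rewrite !mult_off_rank.
Qed.

Lemma lex_gt_rank_multinom f g : rank_valued f -> rank_valued g ->
  lex_gt rk [multinom mult f (mrank rk j) | j < nv] [multinom mult g (mrank rk j) | j < nv]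
  <-> mult_lex_gt f g.
Proof.
move=> fR gR; split=> [[j [lt_j eq_j]] | [w [lt_w eq_w]]].
  exists (mrank rk j); split=> [| w lt_w]; first by move: lt_j; rewrite !mnmE.
  case: (boolP [exists j', w == mrank rk j']) => [/existsP[j' /eqP Ew] | ].
    by have := eq_j j'; rewrite !mnmE -Ew => ->.
  by rewrite negb_exists => /forallP wR; rewrite !mult_off_rank.
have [j Ew] : exists j, w = mrank rk j.
  move: (leq_ltn_trans (leq0n _) lt_w); rewrite card_gt0 => /set0Pn[i].
  by rewrite inE => /eqP <-; apply: fR.
exists j; split=> [| j' lt_j']; first by rewrite !mnmE -Ew.
by rewrite !mnmE eq_w // Ew.
Qed.

End RankMultinom.

Section LeadingMonomials.
Variables (K : fieldType) (g1 g2 : V) (u v : nat) (M N : {mpoly K[nv]}).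
Variables (lmM lmN : 'X_{1..nv}).
Hypothesis HM : is_minor_sink g1 u M.
Hypothesis HN : is_minor_source g2 v N.
Hypothesis HlmM : is_LM rk M lmM.
Hypothesis HlmN : is_LM rk N lmN.
Variables (l : nat) (p : 'I_l -> VT).
Hypothesis p_decr : forall i j : 'I_l, i < j -> rk (p j) < rk (p i).
Hypothesis L_p : forall j, maxn (lmM j) (lmN j) = #|[set i : 'I_l | var_idx (p i) == j]|.

Local Notation arr := (fun i : 'I_l => var_arr (p i)).
Local Notation row := (fun i : 'I_l => var_row (p i)).
Local Notation col := (fun i : 'I_l => var_col (p i)).
Local Notation SM := (fun i : 'I_l => in_LM lmM (p i)).
Local Notation SN := (fun i : 'I_l => in_LM lmN (p i)).
Local Notation L := [multinom maxn (lmM j) (lmN j) | j < nv].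

Let cellP i : is_cell t s m (arr i) (row i) (col i) := is_cell_var (p i).

Let prankE i : prank var_rank arr row col i = rk (p i) := var_rank_var (p i).

Let prank_decr (i j : 'I_l) :
  i < j -> prank var_rank arr row col j < prank var_rank arr row col i.
Proof. by rewrite !prankE; apply: p_decr. Qed.

Let SM_sink i : SM i -> t (arr i) = g1 := (sink_minor_LM HM HlmM).1 (p i).

Let SN_source i : SN i -> s (arr i) = g2 := (source_minor_LM HN HlmN).1 (p i).

Let SM_chain (i j : 'I_l) : SM i -> SM j -> i < j ->
  row i < row j /\ ltn_lex (arr i : nat, col i) (arr j : nat, col j).
Proof. by move=> Si Sj /p_decr; apply: (sink_minor_LM HM HlmM).2. Qed.

Let SN_chain (i j : 'I_l) : SN i -> SN j -> i < j ->
  col i < col j /\ ltn_lex (arr i : nat, row i) (arr j : nat, row j).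
Proof. by move=> Si Sj /p_decr; apply: (source_minor_LM HN HlmN).2. Qed.

Let prank_valued : rank_valued (prank var_rank arr row col).
Proof. by move=> i; exists (var_idx (p i)); rewrite prankE mrank_var_idx. Qed.

Let qrank_valued sg tau : in_G SM SN sg tau -> rank_valued (qrank var_rank arr row col sg tau).
Proof.
move=> G i; have [x [Ek Ea Eb]] := cell_var (qcell cellP SM_sink SN_source G i).
by exists (var_idx x); rewrite mrank_var_idx -var_rank_var Ek Ea Eb.
Qed.

Let Lmon_mult sg tau : in_G SM SN sg tau ->
  Lmon p sg tau = [multinom mult (qrank var_rank arr row col sg tau) (mrank rk j) | j < nv].
Proof.
move=> G; apply/mnmP => j; rewrite !mnmE; apply: eq_card => i.
by rewrite !inE find_var_idx //; apply: (qcell cellP SM_sink SN_source G).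
Qed.

Let L_mult : L = [multinom mult (prank var_rank arr row col) (mrank rk j) | j < nv].
Proof.
apply/mnmP => j; rewrite !mnmE L_p; apply: eq_card => i.
by rewrite !inE prankE -mrank_var_idx (inj_eq mrank_inj).
Qed.

Lemma Lmon_eq_L_iff sg tau : in_G SM SN sg tau ->
  Lmon p sg tau = L <-> in_H arr SM SN sg tau.
Proof.
move=> G; rewrite Lmon_mult // L_mult.
rewrite -(mult_qrank_eq_iff var_rank_inj var_rank_right var_rank_down var_rank_right_sink
  var_rank_down_source cellP prank_decr SM_sink SN_source SM_chain SN_chain G).
split=> [/rank_multinom_inj | E]; first by apply; [exact: qrank_valued | exact: prank_valued].
by apply/mnmP => j; rewrite !mnmE E.
Qed.

Lemma strict_violation_iff_lex_gt : strict_violation arr row col SM SN <->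
  exists sg tau, in_G SM SN sg tau /\ lex_gt rk (Lmon p sg tau) L.
Proof.
rewrite (strict_violation_iff var_rank_inj var_rank_right var_rank_down var_rank_right_sink
  var_rank_down_source cellP prank_decr SM_sink SN_source SM_chain SN_chain).
split=> -[sg [tau [G lex]]]; exists sg, tau; split=> //;
  have Elex := lex_gt_rank_multinom (qrank_valued G) prank_valued;
  by move: lex; rewrite Lmon_mult // L_mult => /Elex.
Qed.

End LeadingMonomials.

End Quiver.

Theorem proposition2p13
  (K : fieldType) (V : finType) (r : nat) (s t : 'I_r -> V) (m : V -> nat)
  (Hbip : bipartite s t)
  (rk : VarT s t m -> nat) (Hrk_inj : injective rk)
  (Hrk_cons : consistent_order rk)
  (g1 g2 : V) (h : 'I_r) (Hh : s h = g2 /\ t h = g1)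
  (u v : nat) (Hu : (0 < u)%N) (Hv : (0 < v)%N)
  (M N : {mpoly K[nvar s t m]})
  (HM : is_minor_sink g1 u M) (HN : is_minor_source g2 v N)
  (lmM lmN : 'X_{1..nvar s t m})
  (HlmM : is_LM rk M lmM) (HlmN : is_LM rk N lmN)
  (l : nat) (p : 'I_l -> VarT s t m)
  (Hp_dec : forall i j : 'I_l, (i < j)%N -> (rk (p j) < rk (p i))%N)
  (HL : forall j : 'I_(nvar s t m),
          maxn (lmM j) (lmN j) = #|[set i : 'I_l | var_idx (p i) == j]|) :
  let inSM (i : 'I_l) := (0 < lmM (var_idx (p i)))%N in
  let inSN (i : 'I_l) := (0 < lmN (var_idx (p i)))%N in
  let inG (sg tau : {perm 'I_l}) :=
    (forall i, ~~ inSM i -> sg i = i) /\ (forall i, ~~ inSN i -> tau i = i) in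
  let L : 'X_{1..nvar s t m} :=
    [multinom maxn (lmM j) (lmN j) | j < nvar s t m] in
  (* (a) *)
  (forall sg tau : {perm 'I_l}, inG sg tau ->
     (Lmon p sg tau = L <->
      [/\ sg = tau,
          (forall i, ~~ (inSM i && inSN i) -> sg i = i) &
          (forall i, var_arr (p (sg i)) = var_arr (p i))])) /\
  (* (b) *)
  ((exists i j k : 'I_l,
      [/\ [/\ i != j, j != k & i != k],
          [/\ inSM i, inSN j, inSM k & inSN k],
          var_arr (p i) = var_arr (p j) /\ var_arr (p j) = var_arr (p k),
          (var_row (p i) < var_row (p j) < var_row (p k))%N &
          (var_col (p j) < var_col (p i) < var_col (p k))%N])
   <->
   exists sg tau : {perm 'I_l}, inG sg tau /\ lex_gt rk (Lmon p sg tau) L).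
Proof.
move=> inSM inSN inG L; split.
  exact: (Lmon_eq_L_iff Hrk_inj Hrk_cons HM HN HlmM HlmN Hp_dec HL).
exact: (strict_violation_iff_lex_gt Hrk_inj Hrk_cons HM HN HlmM HlmN Hp_dec HL).
Qed.
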